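(* Let $(\mathcal{A},\mathbb{E},\mathfrak{s})$ be a weakly idempotent complete extriangulated category with an admissible model structure $(\mathrm{CoFib},\mathrm{Fib},\mathrm{Weq})$. Let $X\xrightarrow{i}Y\xrightarrow{p}Z\overset{\delta}{\dashrightarrow}$ and $X'\xrightarrow{i'}Y'\xrightarrow{p'}Z'\overset{\delta'}{\dashrightarrow}$ be $\mathbb{E}$-triangles. (1) If $f:X\to X'$ and $g:Y\to Y'$ are weak equivalences with $gi=i'f$, then there exists a weak equivalence $h:Z\to Z'$ with $hp=p'g$ and $f_*\delta=h^*\delta'$. (2) If $g:Y\to Y'$ and $h:Z\to Z'$ are weak equivalences with $hp=p'g$, then there exists a weak equivalence $f:X\to X'$ with $gi=i'f$ and $f_*\delta=h^*\delta'$. (3) If $f:X\to X'$ and $h:Z\to Z'$ are weak equivalences with $f_*\delta=h^*\delta'$, then there exists a weak equivalence $g:Y\to Y'$ with $gi=i'f$ and $p'g=hp$.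
   Context: Extriangulated category $(\mathcal{A},\mathbb{E},\mathfrak{s})$ in the sense of Nakaoka–Palu: additive $\mathcal{A}$, biadditive $\mathbb{E}:\mathcal{A}^{op}\times\mathcal{A}\to\mathrm{Ab}$, realization $\mathfrak{s}$ satisfying (ET1)–(ET4)$^{op}$; realizations are $\mathbb{E}$-triangles $X\to Y\to Z\overset{\delta}{\dashrightarrow}$ with $\delta\in\mathbb{E}(Z,X)$; the first map is an $\mathbb{E}$-inflation with cone $Z$, the second an $\mathbb{E}$-deflation with cocone $X$. $u_*\delta=\mathbb{E}(Z,u)(\delta)$, $w^*\delta=\mathbb{E}(w,X)(\delta)$. Weakly idempotent complete: every split monomorphism has a cokernel. For a (Quillen) model structure $(\mathrm{CoFib},\mathrm{Fib},\mathrm{Weq})$ on $\mathcal{A}$, $\mathcal{C},\mathcal{F},\mathcal{W}$ denote cofibrant, fibrant and trivial objects; it is admissible if $\mathrm{CoFib}$ = $\mathbb{E}$-inflations with cone in $\mathcal{C}$, $\mathrm{Fib}$ = $\mathbb{E}$-deflations with cocone in $\mathcal{F}$, $\mathrm{CoFib}\cap\mathrm{Weq}$ = $\mathbb{E}$-inflations with cone in $\mathcal{C}\cap\mathcal{W}$, $\mathrm{Fib}\cap\mathrm{Weq}$ = $\mathbb{E}$-deflations with cocone in $\mathcal{F}\cap\mathcal{W}$. *)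

From mathcomp Require Import all_boot ssralg.
Set Implicit Arguments.
Unset Strict Implicit.
Unset Printing Implicit Defensive.
Import GRing.Theory.
Local Open Scope ring_scope.

Record PreAddCat := {
  Ob :> Type;
  Mor : Ob -> Ob -> zmodType;
  mcomp : forall A B C : Ob, Mor B C -> Mor A B -> Mor A C;
  idm : forall A : Ob, Mor A A;
  compA : forall (A B C D : Ob) (h : Mor C D) (g : Mor B C) (f : Mor A B),
      mcomp h (mcomp g f) = mcomp (mcomp h g) f;
  comp1m : forall (A B : Ob) (f : Mor A B), mcomp (idm B) f = f;
  compm1 : forall (A B : Ob) (f : Mor A B), mcomp f (idm A) = f;
  compDl : forall (A B C : Ob) (g g' : Mor B C) (f : Mor A B),
      mcomp (g + g') f = mcomp g f + mcomp g' f;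
  compDr : forall (A B C : Ob) (g : Mor B C) (f f' : Mor A B),
      mcomp g (f + f') = mcomp g f + mcomp g f'
}.
Arguments mcomp {P A B C} g f : rename.
Arguments idm {P} A : rename.
Arguments Mor {P} A B : rename.

Section Basic.
Variable P : PreAddCat.

Definition is_iso (A B : P) (f : Mor A B) : Prop :=
  exists g : Mor B A, mcomp g f = idm A /\ mcomp f g = idm B.

Record biproduct (A B : P) := Biproduct {
  bp_ob : P;
  bp_i1 : Mor A bp_ob;
  bp_i2 : Mor B bp_ob;
  bp_p1 : Mor bp_ob A;
  bp_p2 : Mor bp_ob B;
  bp_p1i1 : mcomp bp_p1 bp_i1 = idm A;
  bp_p2i2 : mcomp bp_p2 bp_i2 = idm B;
  bp_p1i2 : mcomp bp_p1 bp_i2 = 0;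
  bp_p2i1 : mcomp bp_p2 bp_i1 = 0;
  bp_sum : mcomp bp_i1 bp_p1 + mcomp bp_i2 bp_p2 = idm bp_ob
}.

Definition mor_dsum (A A' B B' : P) (SA : biproduct A A') (SB : biproduct B B')
  (f : Mor A B) (f' : Mor A' B') : Mor (bp_ob SA) (bp_ob SB) :=
  mcomp (bp_i1 SB) (mcomp f (bp_p1 SA)) + mcomp (bp_i2 SB) (mcomp f' (bp_p2 SA)).

Definition is_split_mono (A B : P) (s : Mor A B) : Prop :=
  exists r : Mor B A, mcomp r s = idm A.

Definition is_cokernel (A B C : P) (s : Mor A B) (q : Mor B C) : Prop :=
  mcomp q s = 0 /\
  forall (T : P) (t : Mor B T), mcomp t s = 0 ->
    exists u : Mor C T, mcomp u q = t /\
      forall u' : Mor C T, mcomp u' q = t -> u' = u.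

Definition is_retract (A B A' B' : P) (f : Mor A B) (g : Mor A' B') : Prop :=
  exists (s1 : Mor A A') (r1 : Mor A' A) (s2 : Mor B B') (r2 : Mor B' B),
    mcomp r1 s1 = idm A /\ mcomp r2 s2 = idm B /\
    mcomp g s1 = mcomp s2 f /\ mcomp f r1 = mcomp r2 g.

Definition llp (A B X Y : P) (i : Mor A B) (p : Mor X Y) : Prop :=
  forall (u : Mor A X) (v : Mor B Y), mcomp p u = mcomp v i ->
    exists d : Mor B X, mcomp d i = u /\ mcomp p d = v.

End Basic.

Record AddCat := {
  addcat :> PreAddCat;
  zob : addcat;
  zob_zero : idm zob = 0;
  biprod_ex : forall A B : addcat, exists S : biproduct A B, True
}.

Definition weakly_idempotent_complete (C : AddCat) : Prop :=
  forall (A B : C) (s : Mor A B), is_split_mono s ->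
    exists (Q : C) (q : Mor B Q), is_cokernel s q.

Definition seq_equiv (P : PreAddCat) (A B B' C : P)
  (x : Mor A B) (y : Mor B C) (x' : Mor A B') (y' : Mor B' C) : Prop :=
  exists b : Mor B B', is_iso b /\ mcomp b x = x' /\ mcomp y' b = y.

Record ExtriCat := {
  ecat :> AddCat;
  (* E(C, A), written Ext C A *)
  Ext : ecat -> ecat -> zmodType;
  (* c^* : E(C,A) -> E(C',A) for c : C' -> C *)
  pb : forall (C' C A : ecat), Mor C' C -> Ext C A -> Ext C' A;
  (* a_* : E(C,A) -> E(C,A') for a : A -> A' *)
  pf : forall (C A A' : ecat), Mor A A' -> Ext C A -> Ext C A';
  pbD : forall C' C A (c : Mor C' C) (d e : Ext C A), pb c (d + e) = pb c d + pb c e;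
  pfD : forall C A A' (a : Mor A A') (d e : Ext C A), pf a (d + e) = pf a d + pf a e;
  pb_id : forall C A (d : Ext C A), pb (idm C) d = d;
  pf_id : forall C A (d : Ext C A), pf (idm A) d = d;
  pb_comp : forall C'' C' C A (c' : Mor C'' C') (c : Mor C' C) (d : Ext C A),
      pb (mcomp c c') d = pb c' (pb c d);
  pf_comp : forall C A A' A'' (a : Mor A A') (a' : Mor A' A'') (d : Ext C A),
      pf (mcomp a' a) d = pf a' (pf a d);
  pb_pf : forall C' C A A' (c : Mor C' C) (a : Mor A A') (d : Ext C A),
      pb c (pf a d) = pf a (pb c d);
  pb_addm : forall C' C A (c c' : Mor C' C) (d : Ext C A), pb (c + c') d = pb c d + pb c' d;
  pf_addm : forall C A A' (a a' : Mor A A') (d : Ext C A), pf (a + a') d = pf a d + pf a' d;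
  (* realization s: real d x y  means  s(d) = [A -x-> B -y-> C] *)
  real : forall (A B C : ecat), Ext C A -> Mor A B -> Mor B C -> Prop;
  real_ex : forall A C (d : Ext C A), exists (B : ecat) (x : Mor A B) (y : Mor B C), real d x y;
  real_uniq : forall A B B' C (d : Ext C A) (x : Mor A B) (y : Mor B C)
      (x' : Mor A B') (y' : Mor B' C), real d x y -> real d x' y' -> seq_equiv x y x' y';
  real_closed : forall A B B' C (d : Ext C A) (x : Mor A B) (y : Mor B C)
      (x' : Mor A B') (y' : Mor B' C), real d x y -> seq_equiv x y x' y' -> real d x' y';
  real_morph : forall A B C A' B' C' (d : Ext C A) (d' : Ext C' A')
      (x : Mor A B) (y : Mor B C) (x' : Mor A' B') (y' : Mor B' C')
      (a : Mor A A') (c : Mor C C'),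
      real d x y -> real d' x' y' -> pf a d = pb c d' ->
      exists b : Mor B B', mcomp b x = mcomp x' a /\ mcomp y' b = mcomp c y;
  real_zero : forall (A C : ecat) (S : biproduct A C),
      real (0 : Ext C A) (bp_i1 S) (bp_p2 S);
  real_dsum : forall A B C A' B' C' (d : Ext C A) (d' : Ext C' A')
      (x : Mor A B) (y : Mor B C) (x' : Mor A' B') (y' : Mor B' C')
      (SA : biproduct A A') (SB : biproduct B B') (SC : biproduct C C'),
      real d x y -> real d' x' y' ->
      real (pf (bp_i1 SA) (pb (bp_p1 SC) d) + pf (bp_i2 SA) (pb (bp_p2 SC) d'))
           (mor_dsum SA SB x x') (mor_dsum SB SC y y');
  ET3 : forall A B C A' B' C' (d : Ext C A) (d' : Ext C' A')
      (x : Mor A B) (y : Mor B C) (x' : Mor A' B') (y' : Mor B' C')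
      (a : Mor A A') (b : Mor B B'),
      real d x y -> real d' x' y' -> mcomp b x = mcomp x' a ->
      exists c : Mor C C', mcomp c y = mcomp y' b /\ pf a d = pb c d';
  ET3op : forall A B C A' B' C' (d : Ext C A) (d' : Ext C' A')
      (x : Mor A B) (y : Mor B C) (x' : Mor A' B') (y' : Mor B' C')
      (b : Mor B B') (c : Mor C C'),
      real d x y -> real d' x' y' -> mcomp y' b = mcomp c y ->
      exists a : Mor A A', mcomp x' a = mcomp b x /\ pf a d = pb c d';
  ET4 : forall A B C D F (d : Ext D A) (d' : Ext F B)
      (f : Mor A B) (f' : Mor B D) (g : Mor B C) (g' : Mor C F),
      real d f f' -> real d' g g' ->
      exists (E : ecat) (dd : Mor D E) (e : Mor E F) (h' : Mor C E) (d'' : Ext E A),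
        real d'' (mcomp g f) h' /\
        mcomp dd f' = mcomp h' g /\ mcomp e h' = g' /\
        real (pf f' d') dd e /\ pb dd d'' = d /\ pf f d'' = pb e d';
  ET4op : forall A B C D F (d : Ext B D) (d' : Ext C F)
      (f' : Mor D A) (f : Mor A B) (g' : Mor F B) (g : Mor B C),
      real d f' f -> real d' g' g ->
      exists (E : ecat) (dd : Mor D E) (e : Mor E F) (h' : Mor E A) (d'' : Ext C E),
        real d'' h' (mcomp g f) /\
        mcomp h' dd = f' /\ mcomp f h' = mcomp g' e /\
        real (pb g' d) dd e /\ pf e d'' = d' /\ pf dd d = pb g d''
}.
Arguments pb {e C' C A} c d : rename.
Arguments pf {e C A A'} a d : rename.
Arguments real {e A B C} d x y : rename.

(* Model structures (Quillen closed model structure, without the       *)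
(* finite (co)limit axiom) and admissibility                           *)

Record ModelStructure (P : PreAddCat) := {
  CoFib : forall A B : P, Mor A B -> Prop;
  Fib : forall A B : P, Mor A B -> Prop;
  Weq : forall A B : P, Mor A B -> Prop;
  weq_comp : forall A B C (f : Mor A B) (g : Mor B C),
      Weq f -> Weq g -> Weq (mcomp g f);
  weq_left : forall A B C (f : Mor A B) (g : Mor B C),
      Weq f -> Weq (mcomp g f) -> Weq g;
  weq_right : forall A B C (f : Mor A B) (g : Mor B C),
      Weq g -> Weq (mcomp g f) -> Weq f;
  cofib_retract : forall A B A' B' (f : Mor A B) (g : Mor A' B'),
      is_retract f g -> CoFib g -> CoFib f;
  fib_retract : forall A B A' B' (f : Mor A B) (g : Mor A' B'),
      is_retract f g -> Fib g -> Fib f;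
  weq_retract : forall A B A' B' (f : Mor A B) (g : Mor A' B'),
      is_retract f g -> Weq g -> Weq f;
  lift_tcofib : forall A B X Y (i : Mor A B) (p : Mor X Y),
      CoFib i -> Weq i -> Fib p -> llp i p;
  lift_tfib : forall A B X Y (i : Mor A B) (p : Mor X Y),
      CoFib i -> Fib p -> Weq p -> llp i p;
  fact_tcofib : forall A B (f : Mor A B),
      exists (M : P) (i : Mor A M) (p : Mor M B),
        f = mcomp p i /\ CoFib i /\ Weq i /\ Fib p;
  fact_tfib : forall A B (f : Mor A B),
      exists (M : P) (i : Mor A M) (p : Mor M B),
        f = mcomp p i /\ CoFib i /\ Fib p /\ Weq p
}.
Arguments CoFib {P} m {A B} f : rename.
Arguments Fib {P} m {A B} f : rename.
Arguments Weq {P} m {A B} f : rename.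

Section Admissible.
Variables (E : ExtriCat) (M : ModelStructure E).

Definition cofibrant (X : E) : Prop := CoFib M (0 : Mor (zob E) X).
Definition fibrant (X : E) : Prop := Fib M (0 : Mor X (zob E)).
Definition trivial_ob (X : E) : Prop := Weq M (0 : Mor (zob E) X).

Definition inflation_cone_in (S : E -> Prop) (A B : E) (x : Mor A B) : Prop :=
  exists (C : E) (y : Mor B C) (d : Ext C A), S C /\ real d x y.
Definition deflation_cocone_in (S : E -> Prop) (B C : E) (y : Mor B C) : Prop :=
  exists (A : E) (x : Mor A B) (d : Ext C A), S A /\ real d x y.

Definition admissible : Prop :=
  (forall (A B : E) (f : Mor A B), CoFib M f <-> inflation_cone_in cofibrant f) /\
  (forall (A B : E) (f : Mor A B), Fib M f <-> deflation_cocone_in fibrant f) /\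
  (forall (A B : E) (f : Mor A B), (CoFib M f /\ Weq M f) <->
      inflation_cone_in (fun X => cofibrant X /\ trivial_ob X) f) /\
  (forall (A B : E) (f : Mor A B), (Fib M f /\ Weq M f) <->
      deflation_cocone_in (fun X => fibrant X /\ trivial_ob X) f).
End Admissible.

From Pilot Require Import Defs.
From mathcomp Require Import all_boot ssralg.
Set Implicit Arguments.
Unset Strict Implicit.
Unset Printing Implicit Defensive.
Import GRing.Theory.
Local Open Scope ring_scope.

(* A weak equivalence f : X -> X' factors as a trivial cofibration followed by
   a trivial fibration, i.e. (by admissibility) an E-inflation with trivially
   cofibrant cone followed by an E-deflation with trivially fibrant cocone.
   (ET4) and (ET4)^op push an E-triangle along either kind of map while keeping
   a weak equivalence between the middle terms: the auxiliary E-triangles that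
   appear realize the zero extension, hence split, and the splitting can be
   chosen to match the given data.  Pushing delta along f this way and
   comparing with delta' (using the same factorisation for the induced map of
   middle terms) gives (1).  (2) is (1) in the opposite extriangulated
   category, on which the model structure with cofibrations and fibrations
   exchanged is again admissible.  For (3), delta pushed along f and delta'
   pulled back along h both realize f_* delta = h^* delta'. *)

Section AdditiveMorphisms.
Variables (U V : zmodType) (F : U -> V).
Hypothesis FD : {morph F : x y / x + y}.

Lemma additive_morph0 : F 0 = 0.
Proof. by apply: (addrI (F 0)); rewrite -FD !addr0. Qed.

Lemma additive_morphN : {morph F : x / - x}.
Proof. by move=> x; apply: (addrI (F x)); rewrite -FD !subrr additive_morph0. Qed.

Lemma additive_morphB : {morph F : x y / x - y}.
Proof. by move=> x y; rewrite FD additive_morphN. Qed.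

End AdditiveMorphisms.

Section PreAdditive.
Variable P : PreAddCat.
Implicit Types A B C : P.

Lemma compm0 A B C (g : Mor B C) : mcomp g (0 : Mor A B) = 0.
Proof. exact: additive_morph0 (compDr g). Qed.

Lemma comp0m A B C (f : Mor A B) : mcomp (0 : Mor B C) f = 0.
Proof. exact: additive_morph0 (fun g g' => compDl g g' f). Qed.

Lemma compBr A B C (g : Mor B C) (f f' : Mor A B) :
  mcomp g (f - f') = mcomp g f - mcomp g f'.
Proof. exact: (additive_morphB (F := mcomp g) (compDr g)). Qed.

Lemma compBl A B C (g g' : Mor B C) (f : Mor A B) :
  mcomp (g - g') f = mcomp g f - mcomp g' f.
Proof. exact: (additive_morphB (F := mcomp^~ f) (fun g g' => compDl g g' f)). Qed.

Definition biproduct_swap A B (S : biproduct A B) : biproduct B A :=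
  @Biproduct P B A (bp_ob S) (bp_i2 S) (bp_i1 S) (bp_p2 S) (bp_p1 S)
    (bp_p2i2 S) (bp_p1i1 S) (bp_p2i1 S) (bp_p1i2 S)
    (etrans (addrC _ _) (bp_sum S)).

Section Transport.
Variables (A B T : P) (S : biproduct A B).
Variables (b : Mor (bp_ob S) T) (b' : Mor T (bp_ob S)).
Hypotheses (b'b : mcomp b' b = idm (bp_ob S)) (bb' : mcomp b b' = idm T).

Let cancel_b C (u : Mor (bp_ob S) C) : mcomp (mcomp u b') b = u.
Proof. by rewrite -Defs.compA b'b compm1. Qed.

Definition biproduct_transport : biproduct A B.
Proof.
refine (@Biproduct P A B T (mcomp b (bp_i1 S)) (mcomp b (bp_i2 S))
          (mcomp (bp_p1 S) b') (mcomp (bp_p2 S) b') _ _ _ _ _).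
- by rewrite Defs.compA cancel_b bp_p1i1.
- by rewrite Defs.compA cancel_b bp_p2i2.
- by rewrite Defs.compA cancel_b bp_p1i2.
- by rewrite Defs.compA cancel_b bp_p2i1.
- by rewrite !Defs.compA -!(Defs.compA b) -compDr -compDl bp_sum comp1m bb'.
Defined.

End Transport.

Section ChangeOfSection.
Variables (A B : P) (S : biproduct A B) (s : Mor A (bp_ob S)).
Hypothesis p1s : mcomp (bp_p1 S) s = idm A.

Let r := mcomp (bp_p2 S) (idm (bp_ob S) - mcomp s (bp_p1 S)).

Definition biproduct_section : biproduct A B.
Proof.
refine (@Biproduct P A B (bp_ob S) s (bp_i2 S) (bp_p1 S) r p1s _ (bp_p1i2 S) _ _).
- by rewrite /r -Defs.compA compBl comp1m -Defs.compA bp_p1i2 compm0 subr0 bp_p2i2.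
- by rewrite /r -Defs.compA compBl comp1m -Defs.compA p1s compm1 subrr compm0.
- rewrite /r Defs.compA.
  have -> : mcomp (bp_i2 S) (bp_p2 S) = idm _ - mcomp (bp_i1 S) (bp_p1 S).
    by rewrite -(bp_sum S) addrC addKr.
  rewrite compBr compm1 compBl comp1m -!Defs.compA (Defs.compA (bp_p1 S)) p1s comp1m.
  by rewrite opprB addrC addrA subrK subrK.
Defined.

End ChangeOfSection.

End PreAdditive.

Section Additive.
Variable C : AddCat.

Definition biproduct_zob (A : C) : biproduct A (zob C).
Proof.
refine (@Biproduct C A (zob C) A (idm A) 0 (idm A) 0 _ _ _ _ _).
- exact: compm1.
- by rewrite comp0m zob_zero.
- exact: compm0.
- exact: comp0m.
- by rewrite compm1 comp0m addr0.
Defined.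

End Additive.

Section ExtAdditivity.
Variable E : ExtriCat.
Implicit Types A C : E.

Lemma pf0e C A A' (d : Ext C A) : pf (0 : Mor A A') d = 0.
Proof. exact: (additive_morph0 (F := pf^~ d) (fun a a' => pf_addm a a' d)). Qed.

Lemma pb0e C' C A (d : Ext C A) : pb (0 : Mor C' C) d = 0.
Proof. exact: (additive_morph0 (F := pb^~ d) (fun c c' => pb_addm c c' d)). Qed.

Lemma pfe0 C A A' (a : Mor A A') : pf a (0 : Ext C A) = 0.
Proof. exact: additive_morph0 (pfD a). Qed.

Lemma pbe0 C' C A (c : Mor C' C) : pb c (0 : Ext C A) = 0.
Proof. exact: additive_morph0 (pbD c). Qed.

Lemma pbB C' C A (c c' : Mor C' C) (d : Ext C A) : pb (c - c') d = pb c d - pb c' d.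
Proof. exact: (additive_morphB (F := pb^~ d) (fun c c' => pb_addm c c' d)). Qed.

Lemma pfeB C A A' (a : Mor A A') (d d' : Ext C A) : pf a (d - d') = pf a d - pf a d'.
Proof. exact: (additive_morphB (F := pf a) (pfD a)). Qed.

End ExtAdditivity.

Section Extriangulated.
Variable E : ExtriCat.
Implicit Types A B C T : E.

Lemma real_idm_zob A : real (0 : Ext (zob E) A) (idm A) 0.
Proof. exact: real_zero (biproduct_zob A). Qed.

Lemma real_zob_idm A : real (0 : Ext A (zob E)) 0 (idm A).
Proof. exact: real_zero (biproduct_swap (biproduct_zob A)). Qed.

Section Conflation.
Variables (A B C : E) (d : Ext C A) (x : Mor A B) (y : Mor B C).
Hypothesis Hd : real d x y.

Lemma real_comp0 : mcomp y x = 0.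
Proof.
have [c [yx _]] := ET3 (real_idm_zob A) Hd (erefl (mcomp x (idm A))).
by rewrite -yx compm0.
Qed.

Lemma real_pf0 : pf x d = 0.
Proof.
have H0 : mcomp (0 : Mor B (zob E)) (idm B) = mcomp (0 : Mor C (zob E)) y.
  by rewrite !comp0m.
have [a [xa da]] := ET3op Hd (real_idm_zob B) H0.
by move: xa; rewrite !comp1m => <-; rewrite da pbe0.
Qed.

Lemma real_pb0 : pb y d = 0.
Proof.
have H0 : mcomp (idm B) (0 : Mor (zob E) B) = mcomp x (0 : Mor (zob E) A).
  by rewrite !compm0.
have [c [cy dc]] := ET3 (real_zob_idm B) Hd H0.
by move: cy; rewrite !compm1 => <-; rewrite -dc pfe0.
Qed.

Lemma real_factor_infl T (u : Mor T B) : mcomp y u = 0 -> exists v, mcomp x v = u.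
Proof.
move=> yu.
have H0 : mcomp y u = mcomp (0 : Mor (zob E) C) (0 : Mor T (zob E)).
  by rewrite yu comp0m.
have [v [xv _]] := ET3op (real_idm_zob T) Hd H0.
by exists v; rewrite xv compm1.
Qed.

Lemma real_factor_defl T (u : Mor B T) : mcomp u x = 0 -> exists v, mcomp v y = u.
Proof.
move=> ux.
have H0 : mcomp u x = mcomp (0 : Mor (zob E) T) (0 : Mor A (zob E)).
  by rewrite ux comp0m.
have [v [vy _]] := ET3 Hd (real_zob_idm T) H0.
by exists v; rewrite vy comp1m.
Qed.

Lemma real_lift_defl T (u : Mor T C) : pb u d = 0 -> exists v, mcomp y v = u.
Proof.
move=> du.
have H0 : pf (0 : Mor (zob E) A) (0 : Ext T (zob E)) = pb u d by rewrite du pfe0.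
have [v [_ yv]] := real_morph (real_zob_idm T) Hd H0.
by exists v; rewrite yv compm1.
Qed.

Lemma real_pf_kernel T (th : Ext T A) : pf x th = 0 -> exists u : Mor T C, th = pb u d.
Proof.
move=> xth.
have [N [x' [y' Hth]]] := real_ex th.
have [S _] := biprod_ex B T.
have H0 : pf x th = pb (idm T) (0 : Ext T B) by rewrite xth pbe0.
have [b [bx' _]] := real_morph Hth (real_zero S) H0.
have H1 : mcomp (mcomp (bp_p1 S) b) x' = mcomp x (idm A).
  by rewrite -Defs.compA bx' Defs.compA bp_p1i1 comp1m compm1.
have [u [_ thu]] := ET3 Hth Hd H1.
by exists u; rewrite -thu pf_id.
Qed.

End Conflation.

Lemma real0_section A B C (x : Mor A B) (y : Mor B C) (s : Mor C B) :
  real (0 : Ext C A) x y -> mcomp y s = idm C -> exists r : Mor B A, real (0 : Ext A C) s r.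
Proof.
move=> Hxy ys.
have [S0 _] := biprod_ex A C.
have [b [[b' [b'b bb']] [_ yb]]] := real_uniq (real_zero S0) Hxy.
pose S1 := biproduct_swap (biproduct_transport b'b bb').
have p1s : mcomp (bp_p1 S1) s = idm C.
  by rewrite /= -yb -(Defs.compA y) bb' compm1.
by exists (bp_p2 (biproduct_section p1s)); exact: (real_zero (biproduct_section p1s)).
Qed.

Lemma real_cone_iso A B C C' (d : Ext C A) (d' : Ext C' A)
    (x : Mor A B) (y : Mor B C) (y' : Mor B C') (c : Mor C C') :
  real d x y -> real d' x y' -> mcomp c y = y' -> d = pb c d' -> is_iso c.
Proof.
move=> Hd Hd' cy dc.
have c_mono T (u : Mor T C) : mcomp c u = 0 -> u = 0.
  move=> cu.
  have [v yv] : exists v, mcomp y v = u.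
    by apply: (real_lift_defl Hd); rewrite dc -pb_comp cu pb0e.
  have [w xw] : exists w, mcomp x w = v.
    by apply: (real_factor_infl Hd'); rewrite -cy -Defs.compA yv.
  by rewrite -yv -xw Defs.compA (real_comp0 Hd) comp0m.
have c_split_epi T (u' : Mor T C') : exists u, mcomp c u = u'.
  have [u du] : exists u, pb u' d' = pb u d.
    by apply: (real_pf_kernel Hd); rewrite -pb_pf (real_pf0 Hd') pbe0.
  have [v y'v] : exists v, mcomp y' v = mcomp c u - u'.
    by apply: (real_lift_defl Hd'); rewrite pbB pb_comp -dc -du subrr.
  exists (u - mcomp y v).
  by rewrite compBr Defs.compA cy y'v opprB addrC subrK.
have [c' cc'] := c_split_epi _ (idm C').
exists c'; split => //.
apply/eqP; rewrite -subr_eq0; apply/eqP; apply: c_mono.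
by rewrite compBr Defs.compA cc' comp1m compm1 subrr.
Qed.

End Extriangulated.

Section WeakEquivalences.
Variables (P : PreAddCat) (M : ModelStructure P).

Lemma weq_idm (A : P) : Weq M (idm A).
Proof.
have [N [i [p [pi [_ [Wi _]]]]]] := fact_tcofib M (idm A).
have WN : Weq M (idm N) by apply: (weq_left Wi); rewrite comp1m.
apply: (weq_retract _ WN).
by exists i, p, i, p; rewrite -pi !comp1m !compm1.
Qed.

Lemma weq_iso (A B : P) (f : Mor A B) : is_iso f -> Weq M f.
Proof.
move=> [g [gf fg]].
apply: (weq_retract _ (weq_idm B)).
by exists f, g, (idm B), (idm B); rewrite fg !comp1m.
Qed.

End WeakEquivalences.

Section AdmissibleModelStructure.
Variables (E : ExtriCat) (M : ModelStructure E).
Hypothesis adm : admissible M.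
Local Notation tcofibrant X := (cofibrant M X /\ trivial_ob M X).
Local Notation tfibrant X := (fibrant M X /\ trivial_ob M X).

Lemma weq_infl_tcofibrant A B C (d : Ext C A) (x : Mor A B) (y : Mor B C) :
  real d x y -> tcofibrant C -> Weq M x.
Proof.
move=> Hd HC; have [_ [_ [Htcof _]]] := adm.
have Hx : inflation_cone_in (fun X => tcofibrant X) x by exists C, y, d.
by case/(Htcof _ _ x): Hx.
Qed.

Lemma weq_defl_tfibrant A B C (d : Ext C A) (x : Mor A B) (y : Mor B C) :
  real d x y -> tfibrant A -> Weq M y.
Proof.
move=> Hd HA; have [_ [_ [_ Htfib]]] := adm.
have Hy : deflation_cocone_in (fun X => tfibrant X) y by exists A, x, d.
by case/(Htfib _ _ y): Hy.
Qed.

Lemma weq_factor X X' (f : Mor X X') : Weq M f ->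
  exists (X1 W K : E) (j : Mor X X1) (w : Mor X1 W) (ep : Ext W X)
         (k : Mor K X1) (q : Mor X1 X') (ka : Ext X' K),
    f = mcomp q j /\ real ep j w /\ tcofibrant W /\ real ka k q /\ tfibrant K.
Proof.
move=> Wf; have [_ [_ [Htcof Htfib]]] := adm.
have [X1 [j [q [fqj [Cj [Wj Fq]]]]]] := fact_tcofib M f.
have Wq : Weq M q by apply: (weq_left Wj); rewrite -fqj.
have [W [w [ep [HW Hep]]]] := (Htcof _ _ j).1 (conj Cj Wj).
have [K [k [ka [HK Hka]]]] := (Htfib _ _ q).1 (conj Fq Wq).
by exists X1, W, K, j, w, ep, k, q, ka.
Qed.

Lemma real_pf_tcofib X Y Z X1 W (d : Ext Z X) (i : Mor X Y) (p : Mor Y Z)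
    (j : Mor X X1) (w : Mor X1 W) (ep : Ext W X) :
  real d i p -> real ep j w -> tcofibrant W ->
  exists Y1 (i1 : Mor X1 Y1) (p1 : Mor Y1 Z) (m : Mor Y Y1),
    real (pf j d) i1 p1 /\ Weq M m /\ mcomp m i = mcomp i1 j /\ mcomp p1 m = p.
Proof.
move=> Hd Hep HW.
have [Y1 [i1 [p1 H1]]] := real_ex (pf j d).
have [E0 [u [e [h [d0 [Hd0 [_ [eh [Hue [ud0 jd0]]]]]]]]]] := ET4 Hep H1.
(* W -> E0 -> Z realizes w_* j_* d = 0, so it splits; correct a section of e
   by a map through u so that it pulls d0 back to d. *)
rewrite -pf_comp (real_comp0 Hep) pf0e in Hue.
have [s0 es0] : exists s0, mcomp e s0 = idm Z.
  by apply: (real_lift_defl Hue); rewrite pbe0.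
have [t dt] : exists t : Mor Z W, d - pb s0 d0 = pb t ep.
  by apply: (real_pf_kernel Hep); rewrite pfeB -pb_pf jd0 -pb_comp es0 pb_id subrr.
pose s := s0 + mcomp u t.
have es : mcomp e s = idm Z.
  by rewrite compDr es0 Defs.compA (real_comp0 Hue) comp0m addr0.
have sd0 : pb s d0 = d by rewrite pb_addm pb_comp ud0 -dt addrC subrK.
have [r Hsr] := real0_section Hue es.
have [Y2 [a [b [m [c [Hm [ma [hm [Hab _]]]]]]]]] := ET4op Hd0 Hsr.
rewrite sd0 in Hab.
have [phi [iso_phi [phii bphi]]] := real_uniq Hd Hab.
exists Y1, i1, p1, (mcomp m phi); split => //; split; [|split].
- by apply: weq_comp; [exact: weq_iso | exact: weq_infl_tcofibrant Hm HW].
- by rewrite -Defs.compA phii ma.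
- rewrite -eh -Defs.compA (Defs.compA h) hm -Defs.compA (Defs.compA e) es.
  by rewrite comp1m bphi.
Qed.

Lemma real_pf_tfib X1 Y1 Z X' K (th : Ext Z X1) (a : Mor X1 Y1) (b : Mor Y1 Z)
    (k : Mor K X1) (q : Mor X1 X') (ka : Ext X' K) :
  real th a b -> real ka k q -> tfibrant K ->
  exists Y2 (a2 : Mor X' Y2) (b2 : Mor Y2 Z) (m : Mor Y1 Y2),
    real (pf q th) a2 b2 /\ Weq M m /\ mcomp m a = mcomp a2 q /\ mcomp b2 m = b.
Proof.
move=> Hth Hka HK.
have [Y2 [a2 [b2 [m [c [Hm [a2q [b2m [H2 _]]]]]]]]] := ET4 Hka Hth.
exists Y2, a2, b2, m; do !split => //.
exact: weq_defl_tfibrant Hm HK.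
Qed.

Lemma real_pf_weq X Y Z X' (d : Ext Z X) (i : Mor X Y) (p : Mor Y Z) (f : Mor X X') :
  real d i p -> Weq M f ->
  exists Y' (i' : Mor X' Y') (p' : Mor Y' Z) (g : Mor Y Y'),
    real (pf f d) i' p' /\ Weq M g /\ mcomp g i = mcomp i' f /\ mcomp p' g = p.
Proof.
move=> Hd Wf.
have [X1 [W [K [j [w [ep [k [q [ka [fqj [Hep [HW [Hka HK]]]]]]]]]]]]] := weq_factor Wf.
have [Y1 [i1 [p1 [m [H1 [Wm [mi p1m]]]]]]] := real_pf_tcofib Hd Hep HW.
have [Y2 [i2 [p2 [m2 [H2 [Wm2 [m2i1 p2m2]]]]]]] := real_pf_tfib H1 Hka HK.
exists Y2, i2, p2, (mcomp m2 m); split; first by rewrite fqj pf_comp.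
split; [exact: weq_comp | split].
- by rewrite -Defs.compA mi Defs.compA m2i1 -Defs.compA -fqj.
- by rewrite Defs.compA p2m2 p1m.
Qed.

Lemma weq_complete_cone_id_tfib A B C B' C' K (th : Ext C A) (x : Mor A B) (y : Mor B C)
    (dp : Ext C' A) (x' : Mor A B') (y' : Mor B' C')
    (k : Mor K B) (q : Mor B B') (ka : Ext B' K) :
  real th x y -> real dp x' y' -> real ka k q -> tfibrant K -> mcomp q x = x' ->
  exists h : Mor C C', Weq M h /\ mcomp h y = mcomp y' q /\ th = pb h dp.
Proof.
move=> Hth Hdp Hka HK qx.
have [E3 [u [e [v [d3 [Hd3 [vu [qv [Hue [ed3 _]]]]]]]]]] := ET4op Hka Hdp.
(* K -> E3 -> A realizes x'^* ka = 0, so it splits; choose a section of e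
   that v sends to x. *)
rewrite -qx pb_comp (real_pb0 Hka) pbe0 in Hue.
have [s0 es0] : exists s0, mcomp e s0 = idm A.
  by apply: (real_lift_defl Hue); rewrite pbe0.
have [t kt] : exists t, mcomp k t = x - mcomp v s0.
  apply: (real_factor_infl Hka).
  by rewrite compBr qx Defs.compA qv -Defs.compA es0 compm1 subrr.
pose s := s0 + mcomp u t.
have es : mcomp e s = idm A.
  by rewrite compDr es0 Defs.compA (real_comp0 Hue) comp0m addr0.
have vs : mcomp v s = x by rewrite compDr Defs.compA vu kt addrC subrK.
have [r Hsr] := real0_section Hue es.
have [E4 [u4 [e4 [h4 [d4 [Hd4 [_ [e4h4 [He4 [_ sd4]]]]]]]]]] := ET4 Hsr Hd3.
rewrite vs in Hd4.
have [c [cy thc]] := ET3 Hth Hd4 (etrans (comp1m x) (esym (compm1 x))).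
rewrite compm1 in cy; rewrite pf_id in thc.
exists (mcomp e4 c); split; [|split].
- apply: weq_comp; first exact: weq_iso (real_cone_iso Hth Hd4 cy thc).
  exact: weq_defl_tfibrant He4 HK.
- by rewrite -Defs.compA cy e4h4.
- by rewrite pb_comp -ed3 pb_pf -sd4 -pf_comp es pf_id.
Qed.

Lemma weq_complete_cone_id A B C B' C' (th : Ext C A) (x : Mor A B) (y : Mor B C)
    (dp : Ext C' A) (x' : Mor A B') (y' : Mor B' C') (k : Mor B B') :
  real th x y -> real dp x' y' -> Weq M k -> mcomp k x = x' ->
  exists h : Mor C C', Weq M h /\ mcomp h y = mcomp y' k /\ th = pb h dp.
Proof.
move=> Hth Hdp Wk kx.
have [B2 [W [K [j [w [ep [kk [q [ka [kqj [Hep [HW [Hka HK]]]]]]]]]]]]] := weq_factor Wk.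
have [E0 [u [e [v [d0 [Hd0 [uy [_ [Hu [ud0 _]]]]]]]]]] := ET4 Hth Hep.
have qjx : mcomp q (mcomp j x) = x' by rewrite Defs.compA -kqj.
have [h [Wh [hv d0h]]] := weq_complete_cone_id_tfib Hd0 Hdp Hka HK qjx.
exists (mcomp h u); split; [|split].
- by apply: weq_comp => //; exact: weq_infl_tcofibrant Hu HW.
- by rewrite -Defs.compA uy Defs.compA hv -Defs.compA -kqj.
- by rewrite pb_comp -d0h ud0.
Qed.

Lemma weq_complete_cone X Y Z X' Y' Z' (d : Ext Z X) (d' : Ext Z' X')
    (i : Mor X Y) (p : Mor Y Z) (i' : Mor X' Y') (p' : Mor Y' Z')
    (f : Mor X X') (g : Mor Y Y') :
  real d i p -> real d' i' p' -> Weq M f -> Weq M g -> mcomp g i = mcomp i' f ->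
  exists h : Mor Z Z', Weq M h /\ mcomp h p = mcomp p' g /\ pf f d = pb h d'.
Proof.
move=> Hd Hd' Wf Wg gi.
have [Y1 [a [b [g1 [H1 [Wg1 [g1i bg1]]]]]]] := real_pf_weq Hd Wf.
have [h0 [_ fdh0]] := ET3 Hd Hd' gi.
have [k0 [k0a _]] := real_morph H1 Hd' (etrans (pf_id _) fdh0).
rewrite compm1 in k0a.
have [l lp] : exists l, mcomp l p = mcomp k0 g1 - g.
  by apply: (real_factor_defl Hd); rewrite compBl -Defs.compA g1i Defs.compA k0a gi subrr.
pose k := k0 - mcomp l b.
have kg1 : mcomp k g1 = g by rewrite compBl -Defs.compA bg1 lp opprB addrC subrK.
have ka : mcomp k a = i' by rewrite compBl k0a -Defs.compA (real_comp0 H1) compm0 subr0.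
have Wk : Weq M k by apply: (weq_left Wg1); rewrite kg1.
have [h [Wh [hb fdh]]] := weq_complete_cone_id H1 Hd' Wk ka.
exists h; split => //; split => //.
by rewrite -bg1 Defs.compA hb -Defs.compA kg1.
Qed.

End AdmissibleModelStructure.

Definition op_preadd (P : PreAddCat) : PreAddCat.
Proof.
refine (@Build_PreAddCat (Ob P) (fun A B => Mor B A)
          (fun A B C g f => mcomp f g) (@idm P) _ _ _ _ _).
- by move=> A B C D h g f; rewrite Defs.compA.
- by move=> A B f; rewrite compm1.
- by move=> A B f; rewrite comp1m.
- by move=> A B C g g' f; rewrite compDr.
- by move=> A B C g f f'; rewrite compDl.
Defined.

Definition biproduct_of_op (P : PreAddCat) (A B : P)
    (S : biproduct (P := op_preadd P) A B) : biproduct A B :=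
  @Biproduct P A B (bp_ob S) (bp_p1 S) (bp_p2 S) (bp_i1 S) (bp_i2 S)
    (bp_p1i1 S) (bp_p2i2 S) (bp_p2i1 S) (bp_p1i2 S) (bp_sum S).

Definition op_biproduct (P : PreAddCat) (A B : P) (S : biproduct A B) :
    biproduct (P := op_preadd P) A B :=
  @Biproduct (op_preadd P) A B (bp_ob S) (bp_p1 S) (bp_p2 S) (bp_i1 S) (bp_i2 S)
    (bp_p1i1 S) (bp_p2i2 S) (bp_p2i1 S) (bp_p1i2 S) (bp_sum S).

Definition op_add (C : AddCat) : AddCat.
Proof.
refine (@Build_AddCat (op_preadd C) (zob C) (zob_zero C) _).
by move=> A B; have [S _] := biprod_ex A B; exists (op_biproduct S).
Defined.

Definition op_extri (E : ExtriCat) : ExtriCat.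
Proof.
refine (@Build_ExtriCat (op_add E) (fun C A => Ext A C)
  (fun C' C A c d => pf c d) (fun C A A' a d => pb a d)
  _ _ _ _ _ _ _ _ _ (fun A B C d x y => real d y x) _ _ _ _ _ _ _ _ _ _).
- by move=> *; exact: pfD.
- by move=> *; exact: pbD.
- by move=> *; exact: pf_id.
- by move=> *; exact: pb_id.
- by move=> *; exact: pf_comp.
- by move=> *; exact: pb_comp.
- by move=> *; exact: esym (pb_pf _ _ _).
- by move=> *; exact: pf_addm.
- by move=> *; exact: pb_addm.
- by move=> A C d; have [B [x [y H]]] := real_ex d; exists B, y, x.
- move=> A B B' C d x y x' y' H H'.
  have [b [[b' [b'b bb']] [Hy Hx]]] := real_uniq H H'.
  exists b'; split; first by exists b.
  by rewrite /= -Hx -Defs.compA bb' compm1 -Hy Defs.compA b'b comp1m.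
- move=> A B B' C d x y x' y' H [b [[b' [b'b bb']] [xb by']]].
  rewrite /= in b'b bb' xb by'.
  apply: (real_closed H); exists b'; split; first by exists b.
  by rewrite -by' Defs.compA bb' comp1m -xb -Defs.compA b'b compm1.
- move=> A B C A' B' C' d d' x y x' y' a c H H' Hd.
  by have [b [bx' yb]] := real_morph H' H (esym Hd); exists b.
- move=> A C S; exact: real_zero (biproduct_swap (biproduct_of_op S)).
- move=> A B C A' B' C' d d' x y x' y' SA SB SC H H'.
  have := real_dsum (biproduct_of_op SC) (biproduct_of_op SB) (biproduct_of_op SA) H H'.
  by rewrite /mor_dsum /= !pb_pf !Defs.compA.
- move=> A B C A' B' C' d d' x y x' y' a b H H' Hb.
  by have [c [yc dc]] := ET3op H' H Hb; exists c.
- move=> A B C A' B' C' d d' x y x' y' b c H H' Hb.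
  by have [a [ax da]] := ET3 H' H Hb; exists a.
- move=> A B C D F d d' f f' g g' H H'.
  have [E0 [u [e [h [d0 [R1 [R2 [R3 [R4 [R5 R6]]]]]]]]]] := ET4op H' H.
  by exists E0, e, u, h, d0; do !split.
- move=> A B C D F d d' f' f g' g H H'.
  have [E0 [u [e [h [d0 [R1 [R2 [R3 [R4 [R5 R6]]]]]]]]]] := ET4 H' H.
  by exists E0, e, u, h, d0; do !split.
Defined.

Lemma is_retract_op (P : PreAddCat) (A B A' B' : P) (f : Mor B A) (g : Mor B' A') :
  @is_retract (op_preadd P) A B A' B' f g -> is_retract f g.
Proof.
move=> [s1 [r1 [s2 [r2 [r1s1 [r2s2 [gs1 fr1]]]]]]].
by exists r2, s2, r1, s1.
Qed.

Lemma llp_op (P : PreAddCat) (A B X Y : P) (i : Mor B A) (p : Mor Y X) :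
  llp p i -> @llp (op_preadd P) A B X Y i p.
Proof.
move=> Hpi u v uv.
by have [d [dp id]] := Hpi v u (esym uv); exists d.
Qed.

Definition op_model (P : PreAddCat) (M : ModelStructure P) : ModelStructure (op_preadd P).
Proof.
refine (@Build_ModelStructure (op_preadd P) (fun A B f => Fib M f)
  (fun A B f => CoFib M f) (fun A B f => Weq M f) _ _ _ _ _ _ _ _ _ _).
- by move=> A B C f g Wf Wg; exact: weq_comp.
- by move=> A B C f g Wf Wgf; exact: weq_right Wgf.
- by move=> A B C f g Wg Wgf; exact: weq_left Wgf.
- by move=> A B A' B' f g /is_retract_op; exact: fib_retract.
- by move=> A B A' B' f g /is_retract_op; exact: cofib_retract.
- by move=> A B A' B' f g /is_retract_op; exact: weq_retract.
- by move=> A B X Y i p Fi Wi Cp; exact: llp_op (lift_tfib Cp Fi Wi).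
- by move=> A B X Y i p Fi Cp Wp; exact: llp_op (lift_tcofib Cp Wp Fi).
- move=> A B f; have [N [i [p [fpi [Ci [Fp Wp]]]]]] := fact_tfib M f.
  by exists N, p, i.
- move=> A B f; have [N [i [p [fpi [Ci [Wi Fp]]]]]] := fact_tcofib M f.
  by exists N, p, i.
Defined.

Lemma weq_zob_sym (C : AddCat) (M : ModelStructure C) (X : C) :
  Weq M (0 : Mor X (zob C)) <-> Weq M (0 : Mor (zob C) X).
Proof.
have W0 : Weq M (mcomp (0 : Mor X (zob C)) (0 : Mor (zob C) X)).
  by rewrite comp0m -zob_zero; exact: weq_idm.
by split => W; [exact: weq_right W W0 | exact: weq_left W W0].
Qed.

Lemma admissible_op (E : ExtriCat) (M : ModelStructure E) :
  admissible M -> admissible (op_model M : ModelStructure (op_extri E)).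
Proof.
move=> [Hcof [Hfib [Htcof Htfib]]].
have trivial_cocone_op (S : E -> Prop) (B C : E) (y : Mor B C) :
  deflation_cocone_in (fun K => S K /\ trivial_ob M K) y <->
  exists K (x : Mor K B) (d : Ext C K), (S K /\ Weq M (0 : Mor K (zob E))) /\ real d x y.
  by split=> -[K [x [d [[SK WK] Hd]]]]; exists K, x, d; do !split => //; apply/weq_zob_sym.
have trivial_cone_op (S : E -> Prop) (A B : E) (x : Mor A B) :
  inflation_cone_in (fun K => S K /\ trivial_ob M K) x <->
  exists K (y : Mor B K) (d : Ext K A), (S K /\ Weq M (0 : Mor K (zob E))) /\ real d x y.
  by split=> -[K [y [d [[SK WK] Hd]]]]; exists K, y, d; do !split => //; apply/weq_zob_sym.
split; [|split; [|split]] => A B f.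
- exact: Hfib B A f.
- exact: Hcof B A f.
- by split=> [/(Htfib B A f)/trivial_cocone_op | /trivial_cocone_op/(Htfib B A f)].
- by split=> [/(Htcof B A f)/trivial_cone_op | /trivial_cone_op/(Htcof B A f)].
Qed.

Section CompleteTriangleMorphisms.
Variables (E : ExtriCat) (M : ModelStructure E).
Hypothesis adm : admissible M.
Variables (X Y Z X' Y' Z' : E) (d : Ext Z X) (d' : Ext Z' X').
Variables (i : Mor X Y) (p : Mor Y Z) (i' : Mor X' Y') (p' : Mor Y' Z').
Hypotheses (Hd : real d i p) (Hd' : real d' i' p').

Lemma weq_complete_cocone (g : Mor Y Y') (h : Mor Z Z') :
  Weq M g -> Weq M h -> mcomp h p = mcomp p' g ->
  exists f : Mor X X', Weq M f /\ mcomp g i = mcomp i' f /\ pf f d = pb h d'.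
Proof.
move=> Wg Wh hp.
have [f [Wf [fi hd]]] := @weq_complete_cone (op_extri E) (op_model M) (admissible_op adm)
  Z' Y' X' Z Y X d' d p' i' p i h g Hd' Hd Wh Wg (esym hp).
by exists f.
Qed.

Lemma weq_complete_middle (f : Mor X X') (h : Mor Z Z') :
  Weq M f -> Weq M h -> pf f d = pb h d' ->
  exists g : Mor Y Y', Weq M g /\ mcomp g i = mcomp i' f /\ mcomp p' g = mcomp h p.
Proof.
move=> Wf Wh fdh.
have [Y1 [a [b [g1 [H1 [Wg1 [g1i bg1]]]]]]] := real_pf_weq adm Hd Wf.
have [Y2 [p2 [i2 [g2 [H2 [Wg2 [g2p' g2i2]]]]]]] :=
  @real_pf_weq (op_extri E) (op_model M) (admissible_op adm) Z' Y' X' Z d' p' i' h Hd' Wh.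
change (@Mor E Y2 Y' : Type) in g2; rewrite /= -fdh in H2; rewrite /= in g2p' g2i2 Wg2.
have [phi [iso_phi [phia p2phi]]] := real_uniq H1 H2.
exists (mcomp g2 (mcomp phi g1)); split; [|split].
- by apply: weq_comp => //; apply: weq_comp => //; exact: weq_iso.
- by rewrite -!Defs.compA g1i (Defs.compA phi) phia Defs.compA g2i2.
- by rewrite Defs.compA g2p' -Defs.compA (Defs.compA _ phi) p2phi bg1.
Qed.

End CompleteTriangleMorphisms.

Theorem lemma3p2 (E : ExtriCat) (M : ModelStructure E) :
  weakly_idempotent_complete E -> admissible M ->
  forall (X Y Z X' Y' Z' : E) (delta : Ext Z X) (delta' : Ext Z' X')
    (i : Mor X Y) (p : Mor Y Z) (i' : Mor X' Y') (p' : Mor Y' Z'),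
  real delta i p -> real delta' i' p' ->
  (forall (f : Mor X X') (g : Mor Y Y'),
      Weq M f -> Weq M g -> mcomp g i = mcomp i' f ->
      exists h : Mor Z Z', Weq M h /\ mcomp h p = mcomp p' g /\ pf f delta = pb h delta') /\
  (forall (g : Mor Y Y') (h : Mor Z Z'),
      Weq M g -> Weq M h -> mcomp h p = mcomp p' g ->
      exists f : Mor X X', Weq M f /\ mcomp g i = mcomp i' f /\ pf f delta = pb h delta') /\
  (forall (f : Mor X X') (h : Mor Z Z'),
      Weq M f -> Weq M h -> pf f delta = pb h delta' ->
      exists g : Mor Y Y', Weq M g /\ mcomp g i = mcomp i' f /\ mcomp p' g = mcomp h p).
Proof.
move=> _ adm X Y Z X' Y' Z' d d' i p i' p' Hd Hd'.
split; [|split].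
- move=> f g; exact: weq_complete_cone.
- exact: weq_complete_cocone.
- exact: weq_complete_middle.
Qed.
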